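(* Let $A\in\mathbb{R}^{n\times n}$, $B\in\mathbb{R}^{n\times m}$, $\mathcal{A}\in\{0,*\}^{n\times n}$, $\mathcal{B}\in\{0,*\}^{n\times m}$, and let $\lambda_i\in\sigma(A)$. Then $$\max_{\Delta A\in[\mathcal{A}],\,\Delta B\in[\mathcal{B}]}\operatorname{rank}[\lambda_i I-A-\Delta A,\;B+\Delta B]=n$$ if and only if there exist $J_i^R\subseteq[n]$, $J_i^C\subseteq[n+m]$ with $|J_i^R|=|J_i^C|$, and $\bar J_i^R\subseteq[n]\setminus J_i^R$, $\bar J_i^C\subseteq[n+m]\setminus J_i^C$ with $|\bar J_i^R|=|\bar J_i^C|=n-|J_i^C|$, such that the square submatrix $[\lambda_iI-A,\ B]_{J_i^R,J_i^C}$ is nonsingular and the square pattern submatrix $[\mathcal{A},\mathcal{B}]_{\bar J_i^R,\bar J_i^C}$ has full generic rank.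
   Context: For $\mathcal{M}\in\{0,*\}^{n_1\times n_2}$, $[\mathcal{M}]=\{M\in\mathbb{R}^{n_1\times n_2}: M_{ij}=0 \text{ whenever } \mathcal{M}_{ij}=0\}$; the generic rank of $\mathcal{M}$ is the maximum rank of an element of $[\mathcal{M}]$. $M_{S_1,S_2}$ denotes the submatrix with rows indexed by $S_1$ and columns by $S_2$; $[n]=\{1,\dots,n\}$. $\sigma(A)$ is the set of complex eigenvalues of $A$; ranks are over $\mathbb{C}$. *)

From HB Require Import structures.
From mathcomp Require Import all_boot all_order all_algebra.
From mathcomp Require Import complex.
From mathcomp Require Import reals.
Set Implicit Arguments. Unset Strict Implicit. Unset Printing Implicit Defensive.
Import Order.TTheory GRing.Theory Num.Theory.
Local Open Scope ring_scope.

Definition toC (R : realType) (x : R) : R[i] := Complex x 0.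

(* A pattern matrix in {0,*}^{p x q} is a boolean matrix: true = '*', false = 0.
   [P] = real matrices vanishing wherever the pattern is 0. *)
Definition in_pattern (R : realType) p q (P : 'M[bool]_(p, q)) (M : 'M[R]_(p, q)) :=
  forall i j, P i j = false -> M i j = 0.

Definition generic_rank_is (R : realType) p q (P : 'M[bool]_(p, q)) (r : nat) :=
  (exists M : 'M[R]_(p, q), in_pattern P M /\ \rank (map_mx (@toC R) M) = r) /\
  (forall M : 'M[R]_(p, q), in_pattern P M -> (\rank (map_mx (@toC R) M) <= r)%N).

Definition subm (T : Type) p q (S1 : {set 'I_p}) (S2 : {set 'I_q})
  (M : 'M[T]_(p, q)) : 'M[T]_(#|S1|, #|S2|) :=
  \matrix_(i, j) M (enum_val i) (enum_val j).

Definition nonsingular (F : fieldType) a b (M : 'M[F]_(a, b)) :=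
  a = b /\ \rank M = a.

From HB Require Import structures.
From mathcomp Require Import all_boot all_order all_algebra.
From mathcomp Require Import complex.
From mathcomp Require Import reals.
Set Implicit Arguments. Unset Strict Implicit. Unset Printing Implicit Defensive.
Import Order.TTheory GRing.Theory Num.Theory.
Local Open Scope ring_scope.

(* Write M0 = [lam I - A, B]; a perturbation [-dA, dB] is a real matrix P supported
   on the pattern [PA, PB]. If rank (M0 + P) = n, remove the nonzero entries of P one
   at a time while keeping a block of rows R and columns C on which the masked matrix
   has full row rank: an entry (i, j) either can be dropped outright, or dropping it
   leaves full row rank on the block without row i and column j, and then (i, j) is
   recorded in a matching. Once P is exhausted, what remains is a block of M0 of full
   row rank, containing a nonsingular square block, and a matching inside the pattern
   of the remaining rows into the remaining columns; such a matching is exactly a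
   witness of full generic rank. Conversely, starting from the nonsingular block,
   adjoin the matched pairs (i, j) one at a time: of X and X + e_ij at least one has
   full row rank on the enlarged block, so a 0/1 perturbation supported on the
   matching gives rank n. *)

Section Masks.
Variable F : fieldType.

Lemma mxrankM_max m n r s (P : 'M[F]_(m, n)) (X : 'M[F]_(n, r)) (Q : 'M[F]_(r, s)) :
  (\rank (P *m X *m Q) <= \rank X)%N.
Proof. exact: leq_trans (mxrankM_maxl _ _) (mxrankM_maxr _ _). Qed.

Definition sel_mx p (I : {set 'I_p}) : 'M[F]_(p, #|I|) := mxsub id enum_val 1%:M.

Definition dmask p (I : {set 'I_p}) : 'M[F]_p := diag_mx (\row_a (a \in I)%:R).

(* [mask I J X] zeroes the entries of [X] outside [I x J]; unlike [subm] it keeps the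
   ambient size, so the row and column sets can change along the inductions below. *)
Definition mask p q (I : {set 'I_p}) (J : {set 'I_q}) (X : 'M[F]_(p, q)) :=
  dmask I *m X *m dmask J.

Lemma subm_sel p q (I : {set 'I_p}) (J : {set 'I_q}) (X : 'M[F]_(p, q)) :
  subm I J X = (sel_mx I)^T *m X *m sel_mx J.
Proof.
by rewrite trmx_mxsub trmx1 mul_rowsub_mx mul1mx mulmx_colsub mulmx1 -mxsubcr.
Qed.

Lemma sel_mxTK p (I : {set 'I_p}) : (sel_mx I)^T *m sel_mx I = 1%:M.
Proof.
rewrite -[_^T]mulmx1 -subm_sel; apply/matrixP => k l.
by rewrite !mxE (inj_eq enum_val_inj).
Qed.

Lemma sel_mxT p (I : {set 'I_p}) : sel_mx I *m (sel_mx I)^T = dmask I.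
Proof.
apply/matrixP => a b; rewrite !mxE; under eq_bigr do rewrite !mxE.
have [aI|aNI] := boolP (a \in I); last first.
  rewrite mul0rn big1 // => k _.
  case: (a =P enum_val k) => [ak|]; last by rewrite mul0r.
  by rewrite ak enum_valP in aNI.
rewrite (bigD1 (enum_rank_in aI a)) //= enum_rankK_in // eqxx mul1r big1 ?addr0.
  by rewrite eq_sym; case: eqP.
move=> k; case: (a =P enum_val k) => [ak|]; last by rewrite mul0r.
by have := enum_valK_in aI k; rewrite -ak => ->; rewrite eqxx.
Qed.

Lemma subm_sel_conj p q (I : {set 'I_p}) (J : {set 'I_q}) (Y : 'M[F]_(#|I|, #|J|)) :
  subm I J (sel_mx I *m Y *m (sel_mx J)^T) = Y.
Proof. by rewrite subm_sel !mulmxA sel_mxTK mul1mx -mulmxA sel_mxTK mulmx1. Qed.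

Lemma maskE p q (I : {set 'I_p}) (J : {set 'I_q}) (X : 'M[F]_(p, q)) i j :
  mask I J X i j = if (i \in I) && (j \in J) then X i j else 0.
Proof.
rewrite /mask mul_mx_diag mul_diag_mx !mxE.
by case: (i \in I); case: (j \in J); rewrite ?mul1r ?mulr1 ?mul0r ?mulr0.
Qed.

Lemma mask_setT p q (X : 'M[F]_(p, q)) : mask setT setT X = X.
Proof. by apply/matrixP => a b; rewrite maskE !inE. Qed.

Lemma maskD p q (I : {set 'I_p}) (J : {set 'I_q}) (X Y : 'M[F]_(p, q)) :
  mask I J (X + Y) = mask I J X + mask I J Y.
Proof. by rewrite /mask mulmxDr mulmxDl. Qed.

Lemma maskZ p q (I : {set 'I_p}) (J : {set 'I_q}) c (X : 'M[F]_(p, q)) :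
  mask I J (c *: X) = c *: mask I J X.
Proof. by rewrite /mask -scalemxAr -scalemxAl. Qed.

Lemma mask_delta p q (I : {set 'I_p}) (J : {set 'I_q}) i j :
  i \in I -> j \in J -> mask I J (delta_mx i j : 'M[F]_(p, q)) = delta_mx i j.
Proof.
move=> iI jJ; apply/matrixP => a b; rewrite maskE !mxE.
by have [->|_] := eqVneq a i; have [->|_] := eqVneq b j; rewrite ?iI ?jJ //=; case: ifP.
Qed.

Lemma mxrank_mask p q (I : {set 'I_p}) (J : {set 'I_q}) (X : 'M[F]_(p, q)) :
  \rank (mask I J X) = \rank (subm I J X).
Proof.
have eX : mask I J X = sel_mx I *m subm I J X *m (sel_mx J)^T.
  by rewrite subm_sel !mulmxA sel_mxT -mulmxA sel_mxT.
have eS : subm I J X = (sel_mx I)^T *m mask I J X *m sel_mx J.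
  by rewrite eX !mulmxA sel_mxTK mul1mx -mulmxA sel_mxTK mulmx1.
apply/eqP; rewrite eqn_leq; apply/andP; split.
  by rewrite {1}eX mxrankM_max.
by rewrite eS mxrankM_max.
Qed.

Lemma mxrank_mask_le p q (I : {set 'I_p}) (J : {set 'I_q}) (X : 'M[F]_(p, q)) :
  (\rank (mask I J X) <= \rank X)%N.
Proof. exact: mxrankM_max. Qed.

Lemma mxrank_mask_row p q (I : {set 'I_p}) (J : {set 'I_q}) (X : 'M[F]_(p, q)) :
  (\rank (mask I J X) <= #|I|)%N.
Proof. by rewrite mxrank_mask rank_leq_row. Qed.

Lemma mxrank_mask_col p q (I : {set 'I_p}) (J : {set 'I_q}) (X : 'M[F]_(p, q)) :
  (\rank (mask I J X) <= #|J|)%N.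
Proof. by rewrite mxrank_mask rank_leq_col. Qed.

Lemma dmaskM p (I J : {set 'I_p}) : dmask I *m dmask J = dmask (I :&: J).
Proof.
rewrite mulmx_diag; apply/matrixP => a b; rewrite !mxE inE.
by case: (a \in I); case: (a \in J); rewrite ?mulr1 ?mulr0.
Qed.

Lemma mask_dmaskl p q (I I' : {set 'I_p}) (J : {set 'I_q}) (X : 'M[F]_(p, q)) :
  I \subset I' -> dmask I *m mask I' J X = mask I J X.
Proof. by move=> sII'; rewrite /mask !mulmxA dmaskM (setIidPl sII'). Qed.

Lemma mask_dmaskr p q (I : {set 'I_p}) (J J' : {set 'I_q}) (X : 'M[F]_(p, q)) :
  J \subset J' -> mask I J' X *m dmask J = mask I J X.
Proof. by move=> sJJ'; rewrite /mask -mulmxA dmaskM (setIidPr sJJ'). Qed.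

Lemma dmask_delta p q (I : {set 'I_p}) i (j : 'I_q) :
  i \notin I -> dmask I *m (delta_mx i j : 'M[F]_(p, q)) = 0.
Proof.
move=> iNI; rewrite mul_diag_mx; apply/matrixP => a b; rewrite !mxE.
by case: (a =P i) => [->|]; rewrite ?(negbTE iNI) ?mul0r ?mulr0.
Qed.

Lemma delta_dmask p q (J : {set 'I_q}) (i : 'I_p) j :
  j \notin J -> (delta_mx i j : 'M[F]_(p, q)) *m dmask J = 0.
Proof.
move=> jNJ; rewrite mul_mx_diag; apply/matrixP => a b; rewrite !mxE.
by case: (b =P j) => [->|]; rewrite ?(negbTE jNJ) ?andbF ?mul0r ?mulr0.
Qed.

Lemma dmaskU1 p (I : {set 'I_p}) i :
  i \notin I -> dmask (i |: I) = dmask I + delta_mx i i.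
Proof.
move=> iNI; apply/matrixP => a b; rewrite !mxE in_setU1.
case: (a =P b) => [<-|ab].
  by case: (a =P i) => [->|_] /=; rewrite !mulr1n ?(negbTE iNI) ?mulr0n ?add0r ?addr0.
rewrite !mulr0n add0r; case: (a =P i) => [ai|//]; case: (b =P i) => [bi|//].
by case: ab; rewrite ai bi.
Qed.

Lemma row_dmask p q (I : {set 'I_p}) (X : 'M[F]_(p, q)) a :
  row a (dmask I *m X) = if a \in I then row a X else 0.
Proof.
rewrite mul_diag_mx; apply/rowP => b; rewrite !mxE.
by case: (a \in I); rewrite ?mul1r ?mul0r // mxE.
Qed.

End Masks.
Arguments sel_mx {F p} I.
Arguments dmask {F p} I.

Section MaskRank.
Variable F : fieldType.

Lemma mxrank_leq_submx m1 m2 n (U : 'M[F]_(m1, n)) (Z : 'M[F]_(m2, n)) :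
  (U <= Z)%MS -> (\rank Z <= \rank U)%N -> (Z <= U)%MS.
Proof. by move=> sUZ le; rewrite -(mxrank_leqif_sup sUZ).2 eqn_leq le mxrankS. Qed.

(* [U :&: kermx (dmask C)] lies on the line of [e_j], since [U] vanishes outside [j |: C]. *)
Lemma mxrank_dmask_col r q (U : 'M[F]_(r, q)) (C : {set 'I_q}) j :
  j \notin C -> U *m dmask (j |: C) = U ->
  (\rank (U *m dmask C) == \rank U) = ~~ ((delta_mx 0 j : 'rV_q) <= U)%MS.
Proof.
move=> jNC UjC; set K := (U :&: kermx (dmask C))%MS.
have sKU : (K <= U)%MS := capmxSl _ _.
rewrite -(mxrank_mul_ker U (dmask C)) -/K -{1}[\rank (U *m _)]addn0 eqn_add2l.
rewrite eq_sym mxrank_eq0; apply/idP/idP => [/eqP K0|eNU].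
  apply/negP => eU; have : ((delta_mx 0 j : 'rV_q) <= K)%MS.
    by rewrite /K sub_capmx eU sub_kermx delta_dmask ?eqxx.
  by rewrite K0 submx0 -mxrank_eq0 mxrank_delta.
have sKe : (K <= (delta_mx 0 j : 'rV_q))%MS.
  have KjC : K *m dmask (j |: C) = K by case/submxP: sKU => D ->; rewrite -mulmxA UjC.
  have K0 : K *m dmask C = 0 by apply/sub_kermxP; exact: capmxSr.
  rewrite -KjC dmaskU1 // mulmxDr K0 add0r -(mul_delta_mx (0 : 'I_1) j j).
  by rewrite mulmxA submxMl.
have [//|nzK] := eqVneq K 0; case/negP: eNU.
apply: submx_trans sKU; apply: mxrank_leq_submx sKe _.
by rewrite mxrank_delta lt0n mxrank_eq0.
Qed.

(* If both failed, both row spaces would equal that of [U] (the rows in [R]); then [e_ij],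
   hence [e_j], would lie in it, which [mxrank_dmask_col] forbids. *)
Lemma mxrank_mask_extend p q (Y : 'M[F]_(p, q)) (R : {set 'I_p}) (C : {set 'I_q}) i j :
  i \notin R -> j \notin C -> \rank (mask R C Y) = #|R| ->
  \rank (mask (i |: R) (j |: C) Y) = #|R|.+1 \/
  \rank (mask (i |: R) (j |: C) (Y + delta_mx i j)) = #|R|.+1.
Proof.
move=> iNR jNC rkY.
have sR : R \subset i |: R := subsetUr _ _.
have sC : C \subset j |: C := subsetUr _ _.
have cR : #|i |: R| = #|R|.+1 by rewrite cardsU1 iNR.
set U := mask R (j |: C) Y; set Z := mask (i |: R) (j |: C) Y.
have eZ : mask (i |: R) (j |: C) (Y + delta_mx i j) = Z + delta_mx i j.
  by rewrite maskD mask_delta ?setU11.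
rewrite eZ.
have rkU : \rank U = #|R|.
  apply/eqP; rewrite eqn_leq mxrank_mask_row -{1}rkY -(mask_dmaskr _ _ sC).
  exact: mxrankM_maxl.
have eNU : ~~ ((delta_mx 0 j : 'rV_q) <= U)%MS.
  rewrite -(mxrank_dmask_col (C := C)) //; last by rewrite (mask_dmaskr _ _ (subxx _)).
  by rewrite (mask_dmaskr _ _ sC) rkY rkU.
have UZ : U = dmask R *m Z by rewrite mask_dmaskl.
have UZ' : U = dmask R *m (Z + delta_mx i j) by rewrite mulmxDr dmask_delta // addr0.
have subU W : (U <= W)%MS -> (\rank W <= #|R|.+1)%N -> \rank W != #|R|.+1 -> (W <= U)%MS.
  move=> sUW le ne; apply: mxrank_leq_submx sUW _.
  by rewrite rkU -ltnS ltn_neqAle ne le.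
have [rkZ|rkZ] := eqVneq (\rank Z) #|R|.+1; first by left.
have [rkZ'|rkZ'] := eqVneq (\rank (Z + delta_mx i j)%R) #|R|.+1; first by right.
have sZ : (Z <= U)%MS.
  by apply: subU rkZ; [rewrite UZ submxMl | rewrite -cR mxrank_mask_row].
have sZ' : ((Z + delta_mx i j)%R <= U)%MS.
  by apply: subU rkZ'; [rewrite UZ' submxMl | rewrite -eZ -cR mxrank_mask_row].
have sD : (delta_mx i j <= U)%MS.
  by rewrite -[delta_mx i j](addKr Z) addmx_sub ?eqmx_opp.
case/negP: eNU; rewrite -(mul_delta_mx i (0 : 'I_1) j).
exact: submx_trans (submxMl _ _) sD.
Qed.

Lemma mxrank_mask_delete p q (W : 'M[F]_(p, q)) (R : {set 'I_p}) (C : {set 'I_q}) i j c :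
  i \in R -> j \in C ->
  \rank (mask R C (W + c *: delta_mx i j)) = #|R| -> \rank (mask R C W) != #|R| ->
  \rank (mask (R :\ i) (C :\ j) W) = #|R|.-1.
Proof.
move=> iR jC rkX rkW.
have cR : #|R| = #|R :\ i|.+1 by rewrite (cardsD1 i R) iR.
have sRi : R :\ i \subset R := subD1set R i.
set Wm := mask R C W; set Ur := mask (R :\ i) C W.
have eX : mask R C (W + c *: delta_mx i j) = Wm + c *: delta_mx i j.
  by rewrite maskD maskZ mask_delta.
have UrW : Ur = dmask (R :\ i) *m Wm by rewrite mask_dmaskl.
have UrX : Ur = dmask (R :\ i) *m (Wm + c *: delta_mx i j).
  by rewrite mulmxDr -UrW -scalemxAr dmask_delta ?setD11 // scaler0 addr0.
have XUr : Wm + c *: delta_mx i j = Ur + delta_mx i i *m (Wm + c *: delta_mx i j).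
  by rewrite UrX -mulmxDl -dmaskU1 ?setD11 // setD1K // -eX mask_dmaskl.
have rkUr : \rank Ur = #|R :\ i|.
  apply/eqP; rewrite eqn_leq mxrank_mask_row -ltnS -cR -{1}rkX eX XUr.
  apply: leq_trans (mxrank_add _ _) _; rewrite -addn1 leq_add2l.
  by apply: leq_trans (mxrankM_maxl _ _) _; rewrite mxrank_delta.
have WUr : (Wm <= Ur)%MS.
  apply: mxrank_leq_submx; first by rewrite UrW submxMl.
  by rewrite rkUr -ltnS -cR ltn_neqAle rkW mxrank_mask_row.
have eNUr : ~~ ((delta_mx 0 j : 'rV_q) <= Ur)%MS.
  apply/negP => eUr; have sX : ((Wm + c *: delta_mx i j)%R <= Ur)%MS.
    apply: addmx_sub WUr _; apply: scalemx_sub; rewrite -(mul_delta_mx (0 : 'I_1)).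
    exact: submx_trans (submxMl _ _) eUr.
  by move/mxrankS: sX; rewrite -eX rkX rkUr cR ltnn.
have UrC : Ur *m dmask (j |: C :\ j) = Ur by rewrite setD1K // mask_dmaskr.
rewrite cR /= -(mask_dmaskr _ _ (subD1set C j)) -/Ur -rkUr.
by apply/eqP; rewrite (mxrank_dmask_col _ UrC) ?setD11.
Qed.

Lemma mask_full_cols p q (V : 'M[F]_(p, q)) (R : {set 'I_p}) (C : {set 'I_q}) :
  \rank (mask R C V) = #|R| ->
  exists2 J : {set 'I_q}, J \subset C & #|J| = #|R| /\ \rank (mask R J V) = #|R|.
Proof.
move=> rk; set A := (mask R C V)^T; pose f := maxrankfun A.
pose J0 := [set f k | k : 'I_(\rank A)].
have cJ0 : #|J0| = #|R|.
  by rewrite card_imset ?card_ord ?mxrank_tr //; exact: maxrankfun_inj.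
exists (C :&: J0); first exact: subsetIl.
have eM : mask R (C :&: J0) V = mask R C V *m dmask J0.
  by rewrite /mask -[RHS]mulmxA dmaskM.
have lb : (#|R| <= \rank (mask R (C :&: J0) V))%N.
  rewrite eM -mxrank_tr trmx_mul /dmask tr_diag_mx -/(dmask J0) -/A.
  have : (rowsub f A <= dmask J0 *m A)%MS.
    apply/row_subP => k; rewrite row_rowsub.
    have <- : row (f k) (dmask J0 *m A) = row (f k) A by rewrite row_dmask imset_f.
    exact: row_sub.
  move/mxrankS; apply: leq_trans.
  by have /eqP -> := maxrowsub_free A; rewrite mxrank_tr rk.
have ub : (#|C :&: J0| <= #|R|)%N by rewrite -cJ0 subset_leq_card ?subsetIr.
split; apply/eqP; rewrite eqn_leq ?lb ?mxrank_mask_row // ub.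
exact: leq_trans lb (mxrank_mask_col _ _ _).
Qed.

End MaskRank.

Definition supported_by (V : nmodType) p q (Pi : 'M[bool]_(p, q)) (X : 'M[V]_(p, q)) :=
  forall i j, Pi i j = false -> X i j = 0.

Definition matching p q (Pi : 'M[bool]_(p, q)) (R : {set 'I_p}) (C : {set 'I_q})
    (g : 'I_p -> 'I_q) :=
  {in R &, injective g} /\ (forall a, a \in R -> g a \in C /\ Pi a (g a)).

Definition match_mx (F : fieldType) p q (S : {set 'I_p}) (g : 'I_p -> 'I_q) : 'M[F]_(p, q) :=
  \matrix_(a, b) ((a \in S) && (b == g a))%:R.

Lemma supported_row_mx (V : nmodType) p q1 q2 (P1 : 'M[bool]_(p, q1))
    (P2 : 'M[bool]_(p, q2)) (X1 : 'M[V]_(p, q1)) (X2 : 'M[V]_(p, q2)) :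
  supported_by (row_mx P1 P2) (row_mx X1 X2) <-> supported_by P1 X1 /\ supported_by P2 X2.
Proof.
split=> [hX | [h1 h2] i j].
  by split=> i j; [move: (hX i (lshift _ j)) | move: (hX i (rshift _ j))];
    rewrite !(row_mxEl, row_mxEr).
by case: (split_ordP j) => k ->; rewrite !(row_mxEl, row_mxEr); [apply: h1 | apply: h2].
Qed.

Lemma supported_byN (V : zmodType) p q (Pi : 'M[bool]_(p, q)) (X : 'M[V]_(p, q)) :
  supported_by Pi X -> supported_by Pi (- X).
Proof. by move=> hX i j /hX; rewrite mxE => ->; rewrite oppr0. Qed.

Lemma supported_map (U V : nmodType) (f : U -> V) p q (Pi : 'M[bool]_(p, q)) X :
  f 0 = 0 -> supported_by Pi X -> supported_by Pi (map_mx f X).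
Proof. by move=> f0 hX i j /hX; rewrite mxE => ->. Qed.

Lemma subm_supported (V : nmodType) p q (Pi : 'M[bool]_(p, q)) (X : 'M[V]_(p, q))
    (I : {set 'I_p}) (J : {set 'I_q}) :
  supported_by Pi X -> supported_by (subm I J Pi) (subm I J X).
Proof. by move=> hX k l; rewrite /subm !mxE; apply: hX. Qed.

Lemma matching_extend p q (Pi : 'M[bool]_(p, q)) R C g i j :
  matching Pi R C g -> i \notin R -> j \notin C -> Pi i j ->
  matching Pi (i |: R) (j |: C) (fun a => if a == i then j else g a).
Proof.
move=> [ginj gin] iNR jNC Pij.
have neq_i a : a \in R -> (a == i) = false by move=> aR; apply: contraNF iNR => /eqP <-.
have gNj a : a \in R -> g a != j by move=> /gin[gC _]; apply: contraNneq jNC => <-.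
split=> [a b|a]; rewrite !in_setU1.
  case/predU1P=> [->|aR] /predU1P[->|bR] //; rewrite ?eqxx ?neq_i //.
  - by move/esym/eqP; rewrite (negbTE (gNj b bR)).
  - by move/eqP; rewrite (negbTE (gNj a aR)).
  - exact: ginj.
case/predU1P=> [->|aR]; first by rewrite !eqxx.
by rewrite neq_i //; have [gC gP] := gin a aR; rewrite gC orbT.
Qed.

Lemma setDU1 (T : finType) (R I : {set T}) i :
  i \in R -> i \notin I -> R :\: I = i |: (R :\ i :\: I).
Proof.
move=> iR iNI; apply/setP => a; rewrite !inE.
by case: (a =P i) => [->|] //=; rewrite iR iNI.
Qed.

Section Matchings.
Variable F : fieldType.

Lemma match_mx0 p q (g : 'I_p -> 'I_q) : match_mx F set0 g = 0.
Proof. by apply/matrixP => a b; rewrite !mxE in_set0. Qed.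

Lemma match_mxU1 p q (S : {set 'I_p}) (g : 'I_p -> 'I_q) i :
  i \notin S -> match_mx F (i |: S) g = match_mx F S g + delta_mx i (g i).
Proof.
move=> iNS; apply/matrixP => a b; rewrite !mxE in_setU1.
by case: (a =P i) => [->|_] /=; rewrite ?(negbTE iNS) ?add0r ?addr0.
Qed.

Lemma match_mx_supported p q (Pi : 'M[bool]_(p, q)) (D S : {set 'I_p}) g :
  S \subset D -> (forall a, a \in D -> Pi a (g a)) -> supported_by Pi (match_mx F S g).
Proof.
move=> sSD gP a b; rewrite mxE; have [aS|] //= := boolP (a \in S).
by case: (b =P g a) => // ->; rewrite gP // (subsetP sSD).
Qed.

Lemma sel_conj_supported p q (Pi : 'M[bool]_(p, q)) (I : {set 'I_p}) (J : {set 'I_q})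
    (Y : 'M[F]_(#|I|, #|J|)) :
  supported_by (subm I J Pi) Y -> supported_by Pi (sel_mx I *m Y *m (sel_mx J)^T).
Proof.
move=> hY a b Pab; rewrite !mxE; apply: big1 => l _; rewrite !mxE.
case: (b =P enum_val l) => [bl|]; last by rewrite mulr0.
rewrite big1 ?mul0r // => k _; rewrite !mxE.
case: (a =P enum_val k) => [ak|]; last by rewrite mul0r.
by rewrite hY ?mulr0 // mxE -ak -bl.
Qed.

Lemma drop_entryE p q (P : 'M[F]_(p, q)) i j a b :
  (P - P i j *: delta_mx i j) a b = if (a == i) && (b == j) then 0 else P a b.
Proof.
rewrite !mxE; case: (a =P i) => [->|_]; case: (b =P j) => [->|_] /=;
  by rewrite ?mulr1 ?subrr // mulr0 subr0.
Qed.

Definition mx_supp p q (R : {set 'I_p}) (C : {set 'I_q}) (P : 'M[F]_(p, q)) :=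
  [set x : 'I_p * 'I_q | [&& x.1 \in R, x.2 \in C & P x.1 x.2 != 0]].

Lemma in_mx_supp p q (R : {set 'I_p}) (C : {set 'I_q}) (P : 'M[F]_(p, q)) a b :
  ((a, b) \in mx_supp R C P) = [&& a \in R, b \in C & P a b != 0].
Proof. by rewrite inE. Qed.

Lemma mx_supp_drop p q (R R' : {set 'I_p}) (C C' : {set 'I_q}) (P : 'M[F]_(p, q)) i j :
  (i, j) \in mx_supp R C P -> R' \subset R -> C' \subset C ->
  mx_supp R' C' (P - P i j *: delta_mx i j) \proper mx_supp R C P.
Proof.
move=> ijP sR sC; apply/properP; split; last first.
  by exists (i, j); rewrite // in_mx_supp drop_entryE !eqxx /= !andbF.
apply/subsetP => -[a b]; rewrite !in_mx_supp drop_entryE.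
case: ifP => [_|_ /and3P[aR bC ->]]; first by rewrite eqxx !andbF.
by rewrite (subsetP sR _ aR) (subsetP sC _ bC).
Qed.

(* [g0] only witnesses that ['I_p -> 'I_q] is inhabited; it is returned when the
   matched set of rows is empty. *)
Lemma mask_full_rank_split p q (Pi : 'M[bool]_(p, q)) (g0 : 'I_p -> 'I_q)
    (M0 P : 'M[F]_(p, q)) (R : {set 'I_p}) (C : {set 'I_q}) :
  supported_by Pi P -> \rank (mask R C (M0 + P)) = #|R| ->
  exists (I : {set 'I_p}) (J : {set 'I_q}) g, [/\ I \subset R, J \subset C, #|J| = #|I|,
    \rank (mask I J M0) = #|I| & matching Pi (R :\: I) (C :\: J) g].
Proof.
have [k] := ubnP #|mx_supp R C P|; elim: k R C P => // k IH R C P.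
rewrite ltnS => hk hP hr.
have [s0|/set0Pn[[i j] ijP]] := eqVneq (mx_supp R C P) set0.
  have eM : mask R C (M0 + P) = mask R C M0.
    apply/matrixP => a b; rewrite !maskE mxE; case: ifP => // /andP[aR bC].
    have : (a, b) \notin mx_supp R C P by rewrite s0 in_set0.
    by rewrite in_mx_supp aR bC negbK => /eqP ->; rewrite addr0.
  rewrite eM in hr; have [J sJ [cJ rJ]] := mask_full_cols hr.
  by exists R, J, g0; split; rewrite // setDv; split=> [a b|a]; rewrite in_set0.
have /and3P[iR jC Pij] : [&& i \in R, j \in C & P i j != 0] by rewrite -in_mx_supp.
have Piij : Pi i j by apply: contraTT Pij => /negbTE/hP ->; rewrite eqxx.
set P' := P - P i j *: delta_mx i j.
have hP' : supported_by Pi P'.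
  by move=> a b /hP Pab; rewrite drop_entryE Pab; case: ifP.
have ltP' (R' : {set 'I_p}) (C' : {set 'I_q}) :
    R' \subset R -> C' \subset C -> (#|mx_supp R' C' P'| < k)%N.
  by move=> sR sC; apply: leq_trans (proper_card (mx_supp_drop ijP sR sC)) hk.
have [rk'|rk'] := eqVneq (\rank (mask R C (M0 + P'))) #|R|.
  exact: IH (ltP' _ _ _ _) hP' rk'.
have eP : M0 + P = M0 + P' + P i j *: delta_mx i j by rewrite addrA subrK.
rewrite eP in hr; have := mxrank_mask_delete iR jC hr rk'.
rewrite (cardsD1 i R) iR => rd.
have [I [J [g [sI sJ cJ rI mg]]]] := IH _ _ _ (ltP' _ _ (subD1set R i) (subD1set C j)) hP' rd.
have iNI : i \notin I by apply/negP => /(subsetP sI); rewrite setD11.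
have jNJ : j \notin J by apply/negP => /(subsetP sJ); rewrite setD11.
exists I, J, (fun a => if a == i then j else g a); split => //.
- exact: subset_trans sI (subD1set _ _).
- exact: subset_trans sJ (subD1set _ _).
rewrite (setDU1 iR iNI) (setDU1 jC jNJ).
by apply: matching_extend; rewrite // !inE eqxx /= andbF.
Qed.

Lemma mask_full_rank_complete p q (M0 : 'M[F]_(p, q)) (I I' : {set 'I_p}) (J : {set 'I_q}) g :
  \rank (mask I J M0) = #|I| -> [disjoint I & I'] -> {in I' &, injective g} ->
  (forall a, a \in I' -> g a \notin J) ->
  exists2 S : {set 'I_p}, S \subset I' &
    \rank (mask (I :|: I') (J :|: g @: I') (M0 + match_mx F S g)) = (#|I| + #|I'|)%N.
Proof.
move=> rk; have [k] := ubnP #|I'|; elim: k I' => // k IH I'; rewrite ltnS => cI' dis ginj gNJ.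
have [->|[i iI']] := set_0Vmem I'.
  exists set0; first exact: sub0set.
  by rewrite match_mx0 addr0 imset0 !setU0 cards0 addn0.
have sI : I' :\ i \subset I' := subD1set I' i.
have cI : #|I'| = #|I' :\ i|.+1 by rewrite (cardsD1 i I') iI'.
have ltI : (#|I' :\ i| < k)%N by rewrite -ltnS -cI.
have [S sS rkS] := IH (I' :\ i) ltI (disjointWr sI dis)
  (sub_in2 (subsetP sI) ginj) (fun a aI => gNJ a (subsetP sI a aI)).
have iNR : i \notin I :|: I' :\ i by rewrite in_setU setD11 orbF (disjointFl dis iI').
have jNC : g i \notin J :|: g @: (I' :\ i).
  rewrite in_setU (negbTE (gNJ i iI')) /=; apply/imsetP => -[b bI gb].
  by move: (bI); rewrite -(ginj i b iI' (subsetP sI b bI) gb) setD11.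
have cU : #|I :|: I' :\ i| = (#|I| + #|I' :\ i|)%N.
  by rewrite cardsU (disjoint_setI0 (disjointWr sI dis)) cards0 subn0.
have iNS : i \notin S by apply/negP => /(subsetP sS); rewrite setD11.
have eR : i |: (I :|: I' :\ i) = I :|: I' by rewrite setUCA setD1K.
have eC : g i |: (J :|: g @: (I' :\ i)) = J :|: g @: I' by rewrite setUCA -imsetU1 setD1K.
rewrite -cU in rkS; rewrite cI addnS -cU -eR -eC.
have [rkE|rkE] := mxrank_mask_extend iNR jNC rkS.
  by exists S => //; apply: subset_trans sS sI.
exists (i |: S); first by rewrite subUset sub1set iI' (subset_trans sS sI).
by rewrite match_mxU1 // addrA.
Qed.

Lemma full_row_rank_split p q (Pi : 'M[bool]_(p, q)) (g0 : 'I_p -> 'I_q) (M0 P : 'M[F]_(p, q)) :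
  supported_by Pi P -> \rank (M0 + P)%R = p ->
  exists (I : {set 'I_p}) (J : {set 'I_q}) g,
    [/\ #|J| = #|I|, \rank (subm I J M0) = #|I| & matching Pi (~: I) (~: J) g].
Proof.
move=> hP rk; have rkT : \rank (mask setT setT (M0 + P)) = #|[set: 'I_p]|.
  by rewrite mask_setT rk cardsT card_ord.
have [I [J [g [_ _ cJ rI mg]]]] := mask_full_rank_split g0 hP rkT.
by rewrite mxrank_mask in rI; rewrite !setTD in mg; exists I, J, g.
Qed.

Lemma full_row_rank_complete p q (M0 : 'M[F]_(p, q)) (I : {set 'I_p}) (J : {set 'I_q}) g :
  \rank (subm I J M0) = #|I| -> {in ~: I &, injective g} ->
  (forall a, a \in ~: I -> g a \notin J) ->
  exists2 S : {set 'I_p}, S \subset ~: I & \rank (M0 + match_mx F S g)%R = p.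
Proof.
rewrite -mxrank_mask => rk ginj gNJ.
have dis : [disjoint I & ~: I] by rewrite disjoints_subset setCK.
have [S sS rkS] := mask_full_rank_complete rk dis ginj gNJ.
exists S => //; apply/eqP; rewrite eqn_leq rank_leq_row /=.
by rewrite cardsC card_ord in rkS; rewrite -{1}rkS mxrank_mask_le.
Qed.

End Matchings.

Section GenericRank.
Variable R : realType.

Lemma mxrank_toC m n (M : 'M[R]_(m, n)) : \rank (map_mx (@toC R) M) = \rank M.
Proof. exact: (mxrank_map (real_complex R)). Qed.

Lemma map_match_mx p q (S : {set 'I_p}) (g : 'I_p -> 'I_q) :
  map_mx (@toC R) (match_mx R S g) = match_mx _ S g.
Proof. by apply/matrixP => a b; rewrite !mxE; exact: (rmorph_nat (real_complex R)). Qed.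

Lemma row_mx_perturbE n m (A dA : 'M[R]_n) (B dB : 'M[R]_(n, m)) (lam : R[i]) :
  row_mx (lam%:M - map_mx (@toC R) (A + dA)) (map_mx (@toC R) (B + dB)) =
  row_mx (lam%:M - map_mx (@toC R) A) (map_mx (@toC R) B) + map_mx (@toC R) (row_mx (- dA) dB).
Proof.
have -> : @toC R = real_complex R by [].
by rewrite !map_mxD map_row_mx map_mxN add_row_mx opprD addrA.
Qed.

Lemma generic_rank_matching p q (Pi : 'M[bool]_(p, q)) (I : {set 'I_p}) g :
  {in I &, injective g} -> (forall a, a \in I -> Pi a (g a)) ->
  generic_rank_is R (subm I (g @: I) Pi) #|I|.
Proof.
move=> ginj gP; split=> [|M _]; last by rewrite mxrank_toC rank_leq_row.
have rk0 : \rank (mask set0 set0 (0 : 'M[R]_(p, q))) = #|(set0 : {set 'I_p})|.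
  by rewrite /mask mulmx0 mul0mx mxrank0 cards0.
have dis : [disjoint set0 & I] by rewrite disjoints_subset sub0set.
have [S sS] := mask_full_rank_complete rk0 dis ginj (fun a _ => negbT (in_set0 (g a))).
rewrite !set0U add0r cards0 add0n => rkS.
exists (subm I (g @: I) (match_mx R S g)); split.
  exact: (subm_supported (I := I) (J := g @: I) (match_mx_supported R sS gP)).
by rewrite mxrank_toC -mxrank_mask.
Qed.

Lemma matching_of_generic_rank p q (Pi : 'M[bool]_(p, q)) (g0 : 'I_p -> 'I_q)
    (I : {set 'I_p}) (J : {set 'I_q}) :
  generic_rank_is R (subm I J Pi) #|I| -> exists g, matching Pi I J g.
Proof.
case=> -[Y [hY rkY]] _; rewrite mxrank_toC in rkY.
have hL := sel_conj_supported hY.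
have rkL : \rank (mask I J (0 + sel_mx I *m Y *m (sel_mx J)^T)) = #|I|.
  by rewrite add0r mxrank_mask subm_sel_conj.
have [I0 [J0 [g [_ _ cJ rI0 mg]]]] := mask_full_rank_split g0 hL rkL.
have I00 : I0 = set0 by apply: cards0_eq; rewrite -rI0 /mask mulmx0 mul0mx mxrank0.
have J00 : J0 = set0 by apply: cards0_eq; rewrite cJ I00 cards0.
by exists g; rewrite I00 J00 !setD0 in mg.
Qed.

End GenericRank.

Unset Implicit Arguments.
Theorem lemma2 (R : realType) (n m : nat) (A : 'M[R]_n) (B : 'M[R]_(n, m))
  (PA : 'M[bool]_n) (PB : 'M[bool]_(n, m)) (lam : R[i])
  (hlam : eigenvalue (map_mx (@toC R) A) lam) :
  ((* the maximum over dA in [PA], dB in [PB] of the rank equals n *)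
   (exists (dA : 'M[R]_n) (dB : 'M[R]_(n, m)),
       in_pattern PA dA /\ in_pattern PB dB /\
       \rank (row_mx (lam%:M - map_mx (@toC R) (A + dA)) (map_mx (@toC R) (B + dB)))
         = n) /\
   (forall (dA : 'M[R]_n) (dB : 'M[R]_(n, m)),
       in_pattern PA dA -> in_pattern PB dB ->
       (\rank (row_mx (lam%:M - map_mx (@toC R) (A + dA)) (map_mx (@toC R) (B + dB)))
         <= n)%N))
  <->
  (exists (JR : {set 'I_n}) (JC : {set 'I_(n + m)})
          (bJR : {set 'I_n}) (bJC : {set 'I_(n + m)}),
     #|JR| = #|JC| /\
     bJR \subset ~: JR /\ bJC \subset ~: JC /\
     #|bJR| = (n - #|JC|)%N /\ #|bJC| = (n - #|JC|)%N /\
     nonsingular (subm JR JC (row_mx (lam%:M - map_mx (@toC R) A) (map_mx (@toC R) B))) /\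
     generic_rank_is R (subm bJR bJC (row_mx PA PB)) #|bJR|).
Proof.
split.
- case=> -[dA [dB [hA [hB rk]]]] _.
  have hP : supported_by (row_mx PA PB) (map_mx (@toC R) (row_mx (- dA) dB)).
    rewrite map_row_mx; apply/supported_row_mx; split; apply: supported_map => //.
    exact: supported_byN.
  rewrite row_mx_perturbE in rk.
  have [I [J [g [cJI rI [ginj gin]]]]] := full_row_rank_split (lshift m) hP rk.
  have cI : #|~: I| = (n - #|J|)%N by rewrite cardsCs setCK card_ord cJI.
  have sgJ : (g @: ~: I) \subset ~: J.
    by apply/subsetP => _ /imsetP[a aI ->]; exact: (gin a aI).1.
  have cgI : #|g @: ~: I| = (n - #|J|)%N by rewrite card_in_imset.
  have gen := generic_rank_matching R ginj (fun a aI => (gin a aI).2).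
  by exists I, J, (~: I), (g @: ~: I).
- case=> JR [JC [bJR [bJC [cRC [sR [sC [cbR [cbC [[_ rns] hgen]]]]]]]]].
  split=> [|dA dB _ _]; last exact: rank_leq_row.
  have [g [ginj gin]] := matching_of_generic_rank (lshift m) hgen.
  have ebJR : bJR = ~: JR.
    by apply/eqP; rewrite eqEcard sR cbR -cRC cardsCs setCK card_ord leqnn.
  rewrite ebJR in ginj gin.
  have gNJ a : a \in ~: JR -> g a \notin JC by move=> /gin[/(subsetP sC)]; rewrite inE.
  have [S sS rkS] := full_row_rank_complete rns ginj gNJ.
  have hS := match_mx_supported R sS (fun a aI => (gin a aI).2).
  rewrite -[match_mx R S g]hsubmxK in hS; case/supported_row_mx: hS => hA hB.
  exists (- lsubmx (match_mx R S g)), (rsubmx (match_mx R S g)).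
  do !split; [exact: supported_byN hA | exact: hB |].
  by rewrite row_mx_perturbE opprK hsubmxK map_match_mx.
Qed.
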